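(* Let $(M,g)$ be a Riemannian manifold of dimension $n$, with the objects $\mathcal{T}M$, $V$, $G$, $\xi_1,\xi_2$, $\omega^1,\omega^2$, $f$ as described in the context (on the open subset of $\mathcal{T}M$ where $F^2+K^2>0$). Let $V_{\xi_2}=\{X\in V:\ \omega^2(X)=0\}$ be the vertical Liouville distribution (the $G$-orthogonal complement of $\xi_2$ in $V$, of rank $2n-1$), let $\overline{f}$ be the restriction of $f$ to $V_{\xi_2}$ (which takes values in $V_{\xi_2}$), let $\overline{\xi}=\xi_1$ (a section of $V_{\xi_2}$) and $\overline{\eta}=\omega^1|_{V_{\xi_2}}$. Then $(\overline{f},\overline{\xi},\overline{\eta})$ is an almost contact structure on $V_{\xi_2}$; more precisely: (i) $\overline{f}^3+\overline{f}=0$ and $\operatorname{rank}\overline{f}=2n-2$; (ii) $\overline{\eta}(\overline{\xi})=1$, $\overline{f}(\overline{\xi})=0$, $\overline{\eta}\circ\overline{f}=0$; (iii) $\overline{f}^2(X)=-X+\overline{\eta}(X)\overline{\xi}$ for every $X\in\Gamma(V_{\xi_2})$.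
   Context: Let $M$ be an $n$-dimensional smooth manifold with a Riemannian metric $g=(g_{ij})$, with inverse matrix $(g^{ij})$; summation convention is used. The big-tangent manifold $\mathcal{T}M$ is the total space of the Whitney sum $TM\oplus T^*M\to M$; over a chart $(U,(x^i))$ of $M$ it has coordinates $(x^i,y^i,p_i)$, the point being $y^i\frac{\partial}{\partial x^i}|_x+p_i\,dx^i|_x$. The vertical bundle $V\subset T\mathcal{T}M$ is the subbundle tangent to the fibres of $\mathcal{T}M\to M$, locally spanned by $\{\frac{\partial}{\partial y^i},\frac{\partial}{\partial p_i}\}$. Put $y_i=g_{ij}y^j$, $p^i=g^{ij}p_j$, $F^2=g_{ij}y^iy^j$, $K^2=g^{ij}p_ip_j$; all objects are considered on the open set where $F^2+K^2>0$. $G$ is the metric on $V$ with $G(\frac{\partial}{\partial y^i},\frac{\partial}{\partial y^j})=g_{ij}$, $G(\frac{\partial}{\partial p_i},\frac{\partial}{\partial p_j})=g^{ij}$, $G(\frac{\partial}{\partial y^i},\frac{\partial}{\partial p_j})=0$. $\phi:V\to V$ is the bundle endomorphism with $\phi(\frac{\partial}{\partial y^i})=-g_{ij}\frac{\partial}{\partial p_j}$, $\phi(\frac{\partial}{\partial p_i})=g^{ij}\frac{\partial}{\partial y^j}$. Set $\xi_2=\frac{1}{\sqrt{F^2+K^2}}\big(y^i\frac{\partial}{\partial y^i}+p_i\frac{\partial}{\partial p_i}\big)$ and $\xi_1=\frac{1}{\sqrt{F^2+K^2}}\big(p^i\frac{\partial}{\partial y^i}-y_i\frac{\partial}{\partial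 p_i}\big)$. Let $\omega^1,\omega^2$ be the sections of $V^*$ given by $\omega^1(\frac{\partial}{\partial y^i})=\frac{p_i}{\sqrt{F^2+K^2}}$, $\omega^1(\frac{\partial}{\partial p_i})=-\frac{y^i}{\sqrt{F^2+K^2}}$, $\omega^2(\frac{\partial}{\partial y^i})=\frac{y_i}{\sqrt{F^2+K^2}}$, $\omega^2(\frac{\partial}{\partial p_i})=\frac{p^i}{\sqrt{F^2+K^2}}$. Define $f:V\to V$ by $f(X)=\phi(X)-\omega^2(X)\xi_1+\omega^1(X)\xi_2$. *)

(* Pointwise (fibrewise) linear-algebra model of the vertical
   bundle V of the big-tangent manifold at a point (x, y, p) of TM (+) T*M.
   A vertical vector X = X^i d/dy^i + X_i d/dp_i is the row vector
   row_mx (X^i)_i (X_i)_i : 'rV_(n + n); linear maps act on the right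
   (X |-> X *m A), 1-forms are column vectors (X |-> (X *m w) 0 0). *)
From HB Require Import structures.
From mathcomp Require Import all_boot all_order all_algebra.
From mathcomp Require Import reals.
Set Implicit Arguments. Unset Strict Implicit. Unset Printing Implicit Defensive.
Import Order.TTheory GRing.Theory Num.Theory.
Local Open Scope ring_scope.

Section Big.
Variables (R : realType) (n : nat).
Implicit Types (g : 'M[R]_n) (y p : 'rV[R]_n).

Definition sym_posdef g : Prop :=
  g^T = g /\ forall v : 'rV[R]_n, v != 0 -> 0 < (v *m g *m v^T) 0 0.

Definition ginv g : 'M[R]_n := invmx g.

Definition ylow g y : 'rV[R]_n := y *m g.
Definition pup g p : 'rV[R]_n := p *m ginv g.

Definition F2 g y : R := (y *m g *m y^T) 0 0.
Definition K2 g p : R := (p *m ginv g *m p^T) 0 0.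
Definition nrm g y p : R := Num.sqrt (F2 g y + K2 g p).

Definition Gmat g : 'M[R]_(n + n) := block_mx g 0 0 (ginv g).

(* phi(d/dy^i) = - g_ij d/dp_j, phi(d/dp_i) = g^ij d/dy^j *)
Definition phi g : 'M[R]_(n + n) := block_mx 0 (- g) (ginv g) 0.

Definition xi2 g y p : 'rV[R]_(n + n) := (nrm g y p)^-1 *: row_mx y p.
Definition xi1 g y p : 'rV[R]_(n + n) :=
  (nrm g y p)^-1 *: row_mx (pup g p) (- ylow g y).

Definition omega1 g y p : 'cV[R]_(n + n) :=
  (nrm g y p)^-1 *: col_mx p^T (- y^T).
Definition omega2 g y p : 'cV[R]_(n + n) :=
  (nrm g y p)^-1 *: col_mx (ylow g y)^T (pup g p)^T.

Definition ev (X : 'rV[R]_(n + n)) (w : 'cV[R]_(n + n)) : R := (X *m w) 0 0.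

Definition fmat g y p : 'M[R]_(n + n) :=
  phi g - omega2 g y p *m xi1 g y p + omega1 g y p *m xi2 g y p.

Definition fapp g y p (X : 'rV[R]_(n + n)) : 'rV[R]_(n + n) := X *m fmat g y p.

Definition inVxi2 g y p (X : 'rV[R]_(n + n)) : Prop := ev X (omega2 g y p) = 0.

Definition Vxi2 g y p : 'M[R]_(n + n) := kermx (omega2 g y p).

Definition rank_fbar g y p : nat := \rank (Vxi2 g y p *m fmat g y p).

End Big.

(* At each point the vertical fibre is R^(2n) with phi a complex structure
   (phi^2 = -1) exchanging the orthonormal pair xi_2 -> xi_1 -> -xi_2, with
   dual forms omega^2, omega^1.  Then f = phi - omega^2 (x) xi_1
   + omega^1 (x) xi_2 agrees with phi on the phi-invariant complement of
   span(xi_1, xi_2) and kills both vectors, so f^2 = -1 + omega^2 (x) xi_2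
   + omega^1 (x) xi_1.  On ker omega^2 this is the almost contact identity,
   and ker omega^2 meets ker f exactly in the line of xi_1, whence the rank
   2n - 2 of the restriction. *)
From HB Require Import structures.
From mathcomp Require Import all_boot all_order all_algebra.
From mathcomp Require Import reals.
From mathcomp Require Import zify.
Set Implicit Arguments. Unset Strict Implicit. Unset Printing Implicit Defensive.
Import Order.TTheory GRing.Theory Num.Theory.
Local Open Scope ring_scope.

Definition twist (K : fieldType) (m : nat) (P : 'M[K]_m) (w1 w2 : 'cV[K]_m)
    (x1 x2 : 'rV[K]_m) : 'M[K]_m :=
  P - w2 *m x1 + w1 *m x2.

Section TwistAlgebra.
Variables (K : fieldType) (m : nat).
Variables (P : 'M[K]_m) (w1 w2 : 'cV[K]_m) (x1 x2 : 'rV[K]_m).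
Hypotheses (PP : P *m P = - 1%:M) (x2P : x2 *m P = x1) (x1P : x1 *m P = - x2)
  (Pw1 : P *m w1 = w2) (Pw2 : P *m w2 = - w1)
  (x1w1 : x1 *m w1 = 1%:M) (x2w2 : x2 *m w2 = 1%:M)
  (x1w2 : x1 *m w2 = 0) (x2w1 : x2 *m w1 = 0).

Local Notation F := (twist P w1 w2 x1 x2).

Lemma twist_w2 : F *m w2 = 0.
Proof. by rewrite !mulmxDl mulNmx -!mulmxA x1w2 x2w2 Pw2 mulmx0 mulmx1 subr0 addNr. Qed.

Lemma twist_w1 : F *m w1 = 0.
Proof. by rewrite !mulmxDl mulNmx -!mulmxA x1w1 x2w1 Pw1 mulmx0 mulmx1 addr0 subrr. Qed.

Lemma x1_twist : x1 *m F = 0.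
Proof. by rewrite !mulmxDr mulmxN !mulmxA x1w2 x1w1 x1P mul0mx mul1mx subr0 addNr. Qed.

Lemma twist_sqr : F *m F = - 1%:M + w2 *m x2 + w1 *m x1.
Proof.
have -> : F *m F = F *m P.
  by rewrite {2}/twist !mulmxDr mulmxN !mulmxA twist_w2 twist_w1 !mul0mx subr0 addr0.
by rewrite !mulmxDl mulNmx PP -!mulmxA x1P x2P mulmxN opprK.
Qed.

Lemma twist_sqr_ker (X : 'rV[K]_m) :
  X *m w2 = 0 -> X *m F *m F = - X + X *m w1 *m x1.
Proof.
move=> Xw2; rewrite -mulmxA twist_sqr !mulmxDr mulmxN mulmx1 !mulmxA Xw2.
by rewrite mul0mx addr0.
Qed.

Lemma twist_cube_ker (X : 'rV[K]_m) :
  X *m w2 = 0 -> X *m F *m F *m F + X *m F = 0.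
Proof.
by move=> /twist_sqr_ker ->; rewrite mulmxDl mulNmx -mulmxA x1_twist mulmx0 addr0 addNr.
Qed.

Lemma rank_twist_ker : \rank (kermx w2 *m F) = (m - 2)%N.
Proof.
have one_neq0 : (1%:M : 'M[K]_1) != 0.
  by apply/eqP => /matrixP /(_ 0 0); rewrite !mxE => /eqP; rewrite oner_eq0.
have rk_w2 : \rank w2 = 1%N.
  suff w2_neq0 : w2 != 0 by rewrite -mxrank_tr rank_rV trmx_eq0 w2_neq0.
  by apply: contraNneq one_neq0 => w2_0; rewrite -x2w2 w2_0 mulmx0.
have rk_x1 : \rank x1 = 1%N.
  suff x1_neq0 : x1 != 0 by rewrite rank_rV x1_neq0.
  by apply: contraNneq one_neq0 => x1_0; rewrite -x1w1 x1_0 mul0mx.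
have := mxrank_mul_ker (kermx w2) F; rewrite mxrank_ker rk_w2.
set C := (kermx w2 :&: kermx F)%MS.
suff -> : \rank C = 1%N by lia.
apply/eqP; rewrite eqn_leq -{1 2}rk_x1; apply/andP; split; last first.
  by apply: mxrankS; rewrite sub_capmx !sub_kermx x1w2 x1_twist !eqxx.
have Cw2 : C *m w2 = 0 by apply/eqP; rewrite -sub_kermx capmxSl.
have CF : C *m F = 0 by apply/eqP; rewrite -sub_kermx capmxSr.
have CE : C = C *m w1 *m x1.
  have := congr1 (mulmx C) twist_sqr.
  rewrite mulmxA CF mul0mx !mulmxDr mulmxN mulmx1 !mulmxA Cw2 mul0mx addr0.
  by move/eqP; rewrite eq_sym addrC subr_eq0 => /eqP.
by apply: mxrankS; rewrite {1}CE submxMl.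
Qed.

End TwistAlgebra.

Lemma sym_posdef_unitmx (R : realType) (n : nat) (g : 'M[R]_n) :
  sym_posdef g -> g \in unitmx.
Proof.
move=> [_ gpos]; rewrite -row_free_unit -kermx_eq0.
apply/negP => /negP /rowV0Pn [v /sub_kermxP vg v_neq0].
by have := gpos v v_neq0; rewrite vg mul0mx mxE ltxx.
Qed.

Lemma mx11_tr (R : nzRingType) (A : 'M[R]_1) : A^T = A.
Proof. by apply/matrixP => i j; rewrite !ord1 mxE. Qed.

Section LiouvilleFrame.
Variables (R : realType) (n : nat) (g : 'M[R]_n) (y p : 'rV[R]_n).
Hypotheses (g_posdef : sym_posdef g) (FK_gt0 : 0 < F2 g y + K2 g p).

Local Notation B := (ginv g).

Let gB : g *m B = 1%:M.
Proof. by rewrite mulmxV // sym_posdef_unitmx. Qed.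

Let Bg : B *m g = 1%:M.
Proof. by rewrite mulVmx // sym_posdef_unitmx. Qed.

Let gT : g^T = g.
Proof. by case: g_posdef. Qed.

Let BT : B^T = B.
Proof. by rewrite /ginv trmx_inv gT. Qed.

Let yp : p *m y^T = y *m p^T.
Proof. by rewrite -[LHS]mx11_tr trmx_mul trmxK. Qed.

Lemma nrm_normalize :
  (nrm g y p)^-1 * (nrm g y p)^-1 * (F2 g y + K2 g p) = 1.
Proof.
have s_neq0 : nrm g y p != 0 by rewrite /nrm sqrtr_eq0 -ltNge.
by rewrite -(sqr_sqrtr (ltW FK_gt0)) -/(nrm g y p) expr2 mulrA mulfVK // mulVf.
Qed.

Lemma xi2_omega2 : xi2 g y p *m omega2 g y p = 1%:M.
Proof.
rewrite /xi2 /omega2 -scalemxAl -scalemxAr scalerA mul_row_col /ylow /pup.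
rewrite !trmx_mul gT BT !mulmxA [y *m g *m y^T]mx11_scalar [p *m B *m p^T]mx11_scalar.
by rewrite -raddfD /= scale_scalar_mx nrm_normalize.
Qed.

Lemma xi1_omega1 : xi1 g y p *m omega1 g y p = 1%:M.
Proof.
rewrite /xi1 /omega1 -scalemxAl -scalemxAr scalerA mul_row_col /ylow /pup mulNmx mulmxN opprK addrC.
rewrite [y *m g *m y^T]mx11_scalar [p *m B *m p^T]mx11_scalar.
by rewrite -raddfD /= scale_scalar_mx nrm_normalize.
Qed.

Lemma xi2_omega1 : xi2 g y p *m omega1 g y p = 0.
Proof. by rewrite /xi2 /omega1 -scalemxAl -scalemxAr mul_row_col mulmxN yp subrr !scaler0. Qed.

Lemma xi1_omega2 : xi1 g y p *m omega2 g y p = 0.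
Proof.
rewrite /xi1 /omega2 -scalemxAl -scalemxAr mul_row_col /ylow /pup !trmx_mul gT BT mulNmx !mulmxA.
by rewrite -(mulmxA p B) Bg -(mulmxA y g) gB !mulmx1 yp subrr !scaler0.
Qed.

Lemma phi_sqr : phi g *m phi g = - 1%:M.
Proof.
rewrite /phi mulmx_block !mul0mx !mulmx0 !add0r !addr0 mulNmx mulmxN gB Bg.
by rewrite (scalar_mx_block n n 1) opp_block_mx !oppr0.
Qed.

Lemma xi2_phi : xi2 g y p *m phi g = xi1 g y p.
Proof. by rewrite /xi2 /xi1 /phi -scalemxAl mul_row_block !mulmx0 !add0r !addr0 mulmxN. Qed.

Lemma xi1_phi : xi1 g y p *m phi g = - xi2 g y p.
Proof.
rewrite /xi1 /xi2 /phi -scalemxAl mul_row_block !mulmx0 !add0r !addr0 /ylow /pup !mulNmx mulmxN.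
by rewrite -!mulmxA gB Bg !mulmx1 -scalerN opp_row_mx.
Qed.

Lemma phi_omega1 : phi g *m omega1 g y p = omega2 g y p.
Proof.
rewrite /omega1 /omega2 /phi -scalemxAr mul_block_col !mul0mx !add0r !addr0 mulNmx mulmxN opprK.
by rewrite /ylow /pup !trmx_mul gT BT.
Qed.

Lemma phi_omega2 : phi g *m omega2 g y p = - omega1 g y p.
Proof.
rewrite /omega1 /omega2 /phi -scalemxAr mul_block_col !mul0mx !add0r !addr0 /ylow /pup !trmx_mul gT BT.
by rewrite mulNmx !mulmxA gB Bg !mul1mx -scalerN opp_col_mx opprK.
Qed.

End LiouvilleFrame.

Lemma inVxi2E (R : realType) (n : nat) (g : 'M[R]_n) (y p : 'rV[R]_n) X :
  inVxi2 g y p X <-> X *m omega2 g y p = 0.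
Proof.
rewrite /inVxi2 /ev; split => [Xw | ->]; last by rewrite mxE.
by rewrite [X *m _]mx11_scalar Xw raddf0.
Qed.

Theorem theorem5p4 (R : realType) (n : nat) (g : 'M[R]_n) (y p : 'rV[R]_n) :
  sym_posdef g ->
  0 < F2 g y + K2 g p ->
  (* fbar takes values in V_{xi_2}, and xibar = xi_1 is a section of V_{xi_2} *)
  (forall X, inVxi2 g y p X -> inVxi2 g y p (fapp g y p X)) /\
  inVxi2 g y p (xi1 g y p) /\
  (* (i) *)
  (forall X, inVxi2 g y p X ->
     fapp g y p (fapp g y p (fapp g y p X)) + fapp g y p X = 0) /\
  rank_fbar g y p = (2 * n - 2)%N /\
  (* (ii) *)
  ev (xi1 g y p) (omega1 g y p) = 1 /\
  fapp g y p (xi1 g y p) = 0 /\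
  (forall X, inVxi2 g y p X -> ev (fapp g y p X) (omega1 g y p) = 0) /\
  (* (iii) *)
  (forall X, inVxi2 g y p X ->
     fapp g y p (fapp g y p X) = - X + ev X (omega1 g y p) *: xi1 g y p).
Proof.
move=> Hg Hs.
have PP := phi_sqr Hg; have x2P := xi2_phi g y p; have x1P := xi1_phi y p Hg.
have Pw1 := phi_omega1 y p Hg; have Pw2 := phi_omega2 y p Hg.
have x1w1 := xi1_omega1 Hs; have x2w2 := xi2_omega2 Hg Hs.
have x1w2 := xi1_omega2 y p Hg; have x2w1 := xi2_omega1 g y p.
rewrite /fapp /ev.
split; first by move=> X _; apply/inVxi2E; rewrite -mulmxA twist_w2 // mulmx0.
split; first exact/inVxi2E.
split; first by move=> X /inVxi2E; apply: twist_cube_ker.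
split; first by rewrite /rank_fbar /Vxi2 rank_twist_ker //; lia.
split; first by rewrite x1w1 mxE.
split; first exact: x1_twist.
split; first by move=> X _; rewrite -mulmxA twist_w1 // mulmx0 mxE.
move=> X /inVxi2E Xw2; rewrite twist_sqr_ker //; congr (_ + _).
by rewrite -mul_scalar_mx -mx11_scalar.
Qed.
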